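(* Let $n\ge 4$ be a power of $4$ and let $\mathcal{H}_2$ be as in the context. Then: (a) For all integers $i,j$, $\mathbb{E}_{h\in\mathcal{H}_2}[h_ih_j]=\mathbb{E}_{h\in\mathcal{H}_2}[h_{i+\sqrt n}h_{j+\sqrt n}]$. (b) If $1\le i,i',j,j'\le n$ with $i,i'$ in the same block, $j,j'$ in the same block, $i\ne j$ and $i'\ne j'$, then $\mathbb{E}_{h\in\mathcal{H}_2}[h_ih_j]=\mathbb{E}_{h\in\mathcal{H}_2}[h_{i'}h_{j'}]$. (c) There is an absolute constant $C$ (independent of $n$) such that $\sum_{1\le i,j\le n,\ i\ne j}\left|\mathbb{E}_{h\in\mathcal{H}_2}[h_ih_j]\right|\le Cn$.
   Context: Let $n$ be a power of $4$, $\ell=\sqrt n/2$, and for $1\le c\le \sqrt n$ the $c$-th block is $\{(c-1)\sqrt n+1,\dots,c\sqrt n\}$. The family $\mathcal{H}_1$: a random $h:[n]\to\{-1,1\}$ with independent coordinates, $\mathbb{P}[h_i=1]=\tfrac12+\tfrac{1}{2(\ell+1-c)}$ for $i$ in block $c\le\ell$ and $\mathbb{P}[h_i=1]=\tfrac12-\tfrac{1}{2(c-\ell)}$ for $i$ in block $c\ge\ell+1$. Indices are taken modulo $n$ ($h_{i+n}=h_i$). The family $\mathcal{H}_2$: draw $h$ from $\mathcal{H}_1$ and independently $d$ uniform in $\{0,1,\dots,\sqrt n-1\}$, and output $h'$ with $h'_i=h_{i+d\sqrt n}$ for all $i$ (indices modulo $n$). *)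

From HB Require Import structures.
From mathcomp Require Import all_boot all_order all_algebra.
Set Implicit Arguments. Unset Strict Implicit. Unset Printing Implicit Defensive.
Import Order.TTheory GRing.Theory Num.Theory.
Local Open Scope ring_scope.

(* n = 4^k, sqrt n = 2^k, ell = sqrt n / 2 = 2^(k-1). *)
Definition sqn (k : nat) : nat := 2 ^ k.
Definition ell (k : nat) : nat := (2 ^ k)./2.

(* block (1-based, 1..sqrt n) of the 0-based position p (p = i-1) *)
Definition blk (k p : nat) : nat := (p %/ sqn k + 1)%N.

(* P[h_i = 1] for the coordinate at 0-based position p, family H_1 *)
Definition prob (k p : nat) : rat :=
  let c := blk k p in
  if (c <= ell k)%N then 1/2 + 1 / (2 * ((ell k + 1 - c)%N)%:R)
  else 1/2 - 1 / (2 * ((c - ell k)%N)%:R).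

Definition sgn (b : bool) : rat := if b then 1 else -1.

(* A sample h : [n] -> {-1,1} of H_1 is a tuple t of booleans (true = +1,
   entry p is h_{p+1}); its probability under the product distribution. *)
Definition wt (k : nat) (t : (4 ^ k).-tuple bool) : rat :=
  \prod_(p < 4 ^ k) (if nth false t p then prob k p else 1 - prob k p).

(* 0-based position of the integer index i (1-based, taken modulo n) *)
Definition idx (k : nat) (i : int) : nat := absz ((i - 1) %% (4 ^ k)%:Z)%Z.

Definition hval (k : nat) (t : (4 ^ k).-tuple bool) (i : int) : rat :=
  sgn (nth false t (idx k i)).

(* E_{h' in H_2}[h'_i h'_j], where h'_i = h_{i + d sqrt n}, h ~ H_1,
   d uniform in {0,...,sqrt n - 1} independent of h. *)
Definition E2 (k : nat) (i j : int) : rat :=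
  (1 / (sqn k)%:R) * \sum_(d < sqn k) \sum_(t : (4 ^ k).-tuple bool)
     wt t * hval t (i + (d * sqn k)%N%:Z) * hval t (j + (d * sqn k)%N%:Z).

From HB Require Import structures.
From mathcomp Require Import all_boot all_order all_algebra.
From mathcomp Require Import zify ring lra.
Import Order.TTheory GRing.Theory Num.Theory.
Set Implicit Arguments. Unset Strict Implicit. Unset Printing Implicit Defensive.
Local Open Scope ring_scope.

(* The coordinates of a sample of H_1 are independent, so for i <> j in blocks a and b
   E[h_(i + d sqrt n) h_(j + d sqrt n)] = mu_(a + d) mu_(b + d), where mu_c = 2 P[h = 1] - 1
   is the bias of block c: the sqrt n = 2 ell periodic sequence
   1/ell, ..., 1/2, 1, -1, -1/2, ..., -1/ell.  Averaging over the shift d gives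
   E_(H_2)[h_i h_j] = R(b - a) / sqrt n with R the cyclic autocorrelation of mu, which
   depends on the blocks only; this is (b), while (a) is the invariance of the uniform
   shift d under d |-> d + 1.  For (c) the sum is at most n * sum_d |R(d)|, and partial
   fractions give, for 0 < d <= ell and T = H_ell - H_(ell - d),
   R(d) = 2 H_d / (d (d + 1)) - 2 T / d - 2 T / (2 ell + 1 - d);
   with R(2 ell - d) = R(d), R(0) <= 4 and sum_d T = ell, this bounds sum_d |R(d)| by 44. *)

Lemma big_nat_from0 (V : nmodType) (a b : nat) (F : nat -> V) :
  \sum_(a <= x < b) F x = \sum_(0 <= i < b - a) F (i + a)%N.
Proof. by rewrite -{1}(add0n a) big_addn. Qed.

Lemma sum_periodic_shift (V : nmodType) (s : nat) (F : nat -> V) :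
  (forall x, F (x + s)%N = F x) ->
  forall c, \sum_(0 <= d < s) F (c + d)%N = \sum_(0 <= d < s) F d.
Proof.
move=> Fper; elim=> [|c IH]; first by apply: eq_bigr => d _; rewrite add0n.
case: s Fper IH => [|s] Fper IH; first by rewrite !big_geq.
rewrite big_nat_recr //= -IH big_nat_recl //= addn0 addrC; congr (_ + _).
  by rewrite -(Fper c) addSnnS addnC.
by apply: eq_bigr => d _; rewrite addSnnS.
Qed.

Lemma sum_modn_shift (V : nmodType) (s c : nat) (F : nat -> V) :
  \sum_(0 <= b < s) F ((c + b) %% s)%N = \sum_(0 <= d < s) F d.
Proof.
rewrite (@sum_periodic_shift _ s (fun y => F (y %% s)%N)) => [|x]; last by rewrite modnDr.
by apply: eq_big_nat => d /andP[_ ltds]; rewrite modn_small.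
Qed.

Lemma sum_divn (V : nmodType) (s m : nat) (F : nat -> V) :
  \sum_(0 <= p < m * s) F (p %/ s)%N = (\sum_(0 <= a < m) F a) *+ s.
Proof.
case: s => [|s]; first by rewrite muln0 big_geq.
elim: m => [|m IH]; first by rewrite mul0n !big_geq ?mul0rn.
rewrite mulSn addnC (big_cat_nat _ (n := m * s.+1)) /=; [|lia|lia].
rewrite IH big_nat_recr //= mulrnDl; congr (_ + _).
rewrite big_nat_from0 addKn.
rewrite (eq_big_nat _ _ (F2 := fun _ => F m)); first by rewrite sumr_const_nat.
by move=> i /andP[_ lti]; rewrite addnC divnMDl // divn_small ?addn0.
Qed.

Section Harmonic.
Variable R : realFieldType.
Implicit Types (a d m u N : nat).

Lemma natr_neq0 m : (0 < m)%N -> m%:R != 0 :> R.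
Proof. by rewrite pnatr_eq0 -lt0n. Qed.

Definition harmonic N : R := \sum_(0 <= i < N) 1 / i.+1%:R.

Lemma harmonic0 : harmonic 0 = 0.
Proof. by rewrite /harmonic big_geq. Qed.

Lemma harmonicS N : harmonic N.+1 = harmonic N + 1 / N.+1%:R.
Proof. by rewrite /harmonic big_nat_recr. Qed.

Lemma harmonic_ge0 N : 0 <= harmonic N.
Proof. by apply: sumr_ge0 => i _; rewrite divr_ge0 ?ler0n. Qed.

Definition harmonic_tail u d : R := harmonic u - harmonic (u - d).

Lemma harmonic_tailE u d : (d <= u)%N ->
  harmonic_tail u d = \sum_(0 <= i < d) 1 / (u - d + i.+1)%:R.
Proof.
move=> le_du; rewrite /harmonic_tail /harmonic (big_cat_nat _ (n := u - d)) /=; [|lia|lia].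
rewrite addrC addrK big_nat_from0 subKn //.
by apply: eq_big_nat => i _; rewrite addnC addnS.
Qed.

Lemma harmonic_tail_ge0 u d : (d <= u)%N -> 0 <= harmonic_tail u d.
Proof.
by move=> le_du; rewrite harmonic_tailE //; apply: sumr_ge0 => i _; rewrite divr_ge0 ?ler0n.
Qed.

Lemma harmonic_tail_le u d : (d <= u)%N -> harmonic_tail u d <= d%:R / (u - d).+1%:R.
Proof.
move=> le_du; rewrite harmonic_tailE //.
have -> : d%:R / (u - d).+1%:R = \sum_(0 <= i < d) 1 / (u - d).+1%:R :> R.
  by rewrite sumr_const_nat subn0 mulr_natl mul1r.
apply: ler_sum_nat => i /andP[_ lt_id].
by rewrite !div1r lef_pV2 ?posrE ?ltr0n ?ler_nat; lia.
Qed.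

Lemma sum_harmonic N : \sum_(0 <= i < N) harmonic i = N%:R * harmonic N - N%:R.
Proof.
elim: N => [|N IH]; first by rewrite big_geq // mul0r subr0.
rewrite big_nat_recr //= IH harmonicS -[N.+1%:R]natr1.
by field; rewrite natr1 natr_neq0.
Qed.

Lemma sum_harmonic_tail u : \sum_(0 <= i < u) harmonic_tail u i.+1 = u%:R.
Proof.
rewrite /harmonic_tail sumrB sumr_const_nat subn0.
have -> : \sum_(0 <= i < u) harmonic (u - i.+1) = \sum_(0 <= i < u) harmonic i.
  by rewrite [RHS]big_nat_rev.
by rewrite sum_harmonic mulr_natl; ring.
Qed.

Lemma sum_inv_mul_shift d N : (0 < d)%N ->
  \sum_(0 <= i < N) 1 / (i.+1%:R * (i.+1 + d)%:R)
    = 1 / d%:R * (harmonic d + harmonic N - harmonic (N + d)) :> R.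
Proof.
move=> d_gt0; elim: N => [|N IH].
  by rewrite big_geq // harmonic0 add0n addr0 subrr mulr0.
rewrite big_nat_recr //= IH addSn !harmonicS -addSn natrD.
by field; rewrite nat1r -natrD !natr_neq0 ?addSn.
Qed.

(* Pairing [i] with [N - 1 - i] and using [1 / (x y) = (1 / x + 1 / y) / (x + y)]. *)
Lemma sum_inv_mul_rev a N : (0 < a)%N ->
  \sum_(0 <= i < N) 1 / ((a + i)%:R * (a + N - 1 - i)%:R)
    = 2 / (2 * a + N - 1)%:R * \sum_(0 <= i < N) 1 / (a + i)%:R :> R.
Proof.
move=> a_gt0.
have split_term i : (i < N)%N -> 1 / ((a + i)%:R * (a + N - 1 - i)%:R)
    = 1 / (2 * a + N - 1)%:R * (1 / (a + i)%:R + 1 / (a + N - 1 - i)%:R) :> R.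
  move=> lt_iN.
  have -> : (2 * a + N - 1)%:R = (a + i)%:R + (a + N - 1 - i)%:R :> R.
    by rewrite -natrD; congr (_%:R); lia.
  by field; rewrite -!natrD !natr_neq0 //; lia.
rewrite (eq_big_nat _ _ (fun i (h : (0 <= i < N)%N) => split_term i (proj2 (andP h)))).
rewrite -big_distrr /= big_split /=.
have -> : \sum_(0 <= i < N) 1 / (a + N - 1 - i)%:R = \sum_(0 <= i < N) 1 / (a + i)%:R :> R.
  by rewrite big_nat_rev /=; apply: eq_big_nat => i /andP[_ lt_iN]; congr (1 / _%:R); lia.
by ring.
Qed.

Lemma sum_inv_sq_le N :
  \sum_(0 <= i < N) 1 / (i.+1%:R * i.+1%:R) <= 2 - 2 / N.+1%:R :> R.
Proof.
elim: N => [|N IH]; first by rewrite big_geq // divr1 subrr.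
rewrite big_nat_recr //=; apply: le_trans (lerD IH (lexx _)) _.
rewrite -subr_ge0.
have -> : 2 - 2 / N.+2%:R - (2 - 2 / N.+1%:R + 1 / (N.+1%:R * N.+1%:R))
    = N%:R / (N.+1%:R * N.+1%:R * N.+2%:R) :> R.
  by field; rewrite nat1r -natrD !natr_neq0.
by rewrite divr_ge0 ?mulr_ge0 ?ler0n.
Qed.

Lemma sum_harmonic_abel N :
  \sum_(0 <= i < N) harmonic i.+1 / (i.+1%:R * i.+2%:R) + harmonic N / N.+1%:R
    = \sum_(0 <= i < N) 1 / (i.+1%:R * i.+1%:R) :> R.
Proof.
elim: N => [|N IH]; first by rewrite !big_geq // harmonic0 mul0r addr0.
rewrite !big_nat_recr //= -IH harmonicS.
by field; rewrite nat1r -natrD !natr_neq0.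
Qed.

Lemma sum_harmonic_weighted_le N :
  \sum_(0 <= i < N) harmonic i.+1 / (i.+1%:R * i.+2%:R) <= 2 :> R.
Proof.
have := sum_inv_sq_le N; rewrite -sum_harmonic_abel.
have : 0 <= harmonic N / N.+1%:R :> R by rewrite divr_ge0 ?harmonic_ge0.
have : 0 <= 2 / N.+1%:R :> R by rewrite divr_ge0.
set x := harmonic N / _; set y := 2 / _; lra.
Qed.

Lemma harmonic_tail_div_le u d : (0 < d <= u)%N ->
  harmonic_tail u d / d%:R <= 2 / u%:R + 2 * harmonic_tail u d / u%:R.
Proof.
case/andP=> d_gt0 le_du.
have tail_ge0 : 0 <= harmonic_tail u d by exact: harmonic_tail_ge0.
have inv_le m : (0 < m)%N -> (u <= 2 * m)%N -> 1 / m%:R <= 2 / u%:R :> R.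
  move=> m_gt0 le_u2m; rewrite ler_pdivlMr ?ltr0n; last lia.
  by rewrite div1r mulrC ler_pdivrMr ?ltr0n // -natrM ler_nat.
case: (leqP u (2 * (u - d).+1)) => [le_u|lt_u].
  apply: le_trans (_ : _ <= 2 / u%:R) _; last by rewrite lerDl divr_ge0 ?mulr_ge0.
  apply: le_trans _ (inv_le (u - d).+1 isT le_u).
  by rewrite ler_pdivrMr ?ltr0n // mul1r mulrC; exact: harmonic_tail_le.
apply: le_trans (_ : _ <= 2 * harmonic_tail u d / u%:R) _; last by rewrite lerDr divr_ge0.
have := ler_wpM2l tail_ge0 (inv_le d d_gt0 _); rewrite mul1r mulrA (mulrC _ 2).
by apply; lia.
Qed.

End Harmonic.

Section Autocorrelation.
Variable R : realFieldType.
Implicit Types (a b d u x : nat).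

(* [bias u x] is [E[h_i]] for [i] in the 0-based block [x] of [H_1] when [ell = u]
   (blocks [1/u, ..., 1/2, 1, -1, -1/2, ..., -1/u]), extended [2u]-periodically. *)
Definition bias u x : R :=
  let y := (x %% (2 * u))%N in
  if (y < u)%N then 1 / (u - y)%:R else - (1 / (y.+1 - u)%:R).

Definition autocorr u d : R := \sum_(0 <= x < 2 * u) bias u x * bias u (x + d).

Lemma bias_lt u x : (x < u)%N -> bias u x = 1 / (u - x)%:R.
Proof. by move=> lt_xu; rewrite /bias modn_small ?lt_xu //; lia. Qed.

Lemma bias_ge u x : (u <= x < 2 * u)%N -> bias u x = - (1 / (x.+1 - u)%:R).
Proof. by case/andP=> le_ux lt_x2u; rewrite /bias modn_small // ltnNge le_ux. Qed.

Lemma bias_mod u x : bias u (x %% (2 * u)) = bias u x.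
Proof. by rewrite /bias modn_mod. Qed.

Lemma bias_periodic u x : bias u (x + 2 * u) = bias u x.
Proof. by rewrite /bias modnDr. Qed.

Lemma autocorr_split u d : (d <= u)%N ->
  autocorr u d = 2 * (\sum_(0 <= i < u - d) 1 / (i.+1%:R * (i.+1 + d)%:R))
    - \sum_(0 <= i < d) 1 / (i.+1%:R * (d - i)%:R)
    - \sum_(0 <= i < d) 1 / ((u - d + i.+1)%:R * (u - i)%:R).
Proof.
move=> le_du; rewrite /autocorr.
rewrite (big_cat_nat _ (n := u - d)) //=; last lia.
rewrite (big_cat_nat _ (m := u - d) (n := u)) //=; [|lia|lia].
rewrite (big_cat_nat _ (m := u) (n := 2 * u - d)) //=; [|lia|lia].
have -> : \sum_(0 <= x < u - d) bias u x * bias u (x + d)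
    = \sum_(0 <= i < u - d) 1 / (i.+1%:R * (i.+1 + d)%:R).
  rewrite big_nat_rev /=; apply: eq_big_nat => i /andP[_ lt_i].
  rewrite !bias_lt; [|lia|lia].
  have -> : (u - (0 + (u - d) - i.+1))%N = (i.+1 + d)%N by lia.
  have -> : (u - (0 + (u - d) - i.+1 + d))%N = i.+1 by lia.
  by rewrite !div1r -invfM mulrC.
have -> : \sum_(u - d <= x < u) bias u x * bias u (x + d)
    = - \sum_(0 <= i < d) 1 / (i.+1%:R * (d - i)%:R).
  rewrite big_nat_from0 subKn // -sumrN; apply: eq_big_nat => i /andP[_ lt_id].
  rewrite bias_lt ?bias_ge; [|lia|lia].
  have -> : (u - (i + (u - d)))%N = (d - i)%N by lia.
  have -> : ((i + (u - d) + d).+1 - u)%N = i.+1 by lia.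
  by rewrite mulrN !div1r -invfM mulrC.
have -> : \sum_(u <= x < 2 * u - d) bias u x * bias u (x + d)
    = \sum_(0 <= i < u - d) 1 / (i.+1%:R * (i.+1 + d)%:R).
  rewrite big_nat_from0 (_ : 2 * u - d - u = u - d)%N; last lia.
  apply: eq_big_nat => i /andP[_ lt_i].
  rewrite !bias_ge; [|lia|lia].
  have -> : ((i + u).+1 - u)%N = i.+1 by lia.
  have -> : ((i + u + d).+1 - u)%N = (i.+1 + d)%N by lia.
  by rewrite mulrNN !div1r -invfM.
have -> : \sum_(2 * u - d <= x < 2 * u) bias u x * bias u (x + d)
    = - \sum_(0 <= i < d) 1 / ((u - d + i.+1)%:R * (u - i)%:R).
  rewrite big_nat_from0 (_ : 2 * u - (2 * u - d) = d)%N; last lia.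
  rewrite -sumrN; apply: eq_big_nat => i /andP[_ lt_id].
  rewrite bias_ge; last lia.
  rewrite (_ : i + (2 * u - d) + d = i + 2 * u)%N; last lia.
  rewrite bias_periodic bias_lt; last lia.
  have -> : ((i + (2 * u - d)).+1 - u)%N = (u - d + i.+1)%N by lia.
  by rewrite mulNr !div1r -invfM.
by ring.
Qed.

Lemma autocorr_closed u d : (0 < d <= u)%N ->
  autocorr u d = 2 * harmonic R d / (d%:R * d.+1%:R)
    - 2 * harmonic_tail R u d / d%:R - 2 * harmonic_tail R u d / (2 * u + 1 - d)%:R.
Proof.
case/andP=> d_gt0 le_du; rewrite autocorr_split // sum_inv_mul_shift // subnK //.
have -> : \sum_(0 <= i < d) 1 / (i.+1%:R * (d - i)%:R)
    = \sum_(0 <= i < d) 1 / ((1 + i)%:R * (1 + d - 1 - i)%:R) :> R.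
  by apply: eq_big_nat => i _; congr (1 / (_ * _%:R)); lia.
have -> : \sum_(0 <= i < d) 1 / ((u - d + i.+1)%:R * (u - i)%:R)
    = \sum_(0 <= i < d) 1 / (((u - d).+1 + i)%:R * ((u - d).+1 + d - 1 - i)%:R) :> R.
  by apply: eq_big_nat => i _; congr (1 / (_%:R * _%:R)); lia.
rewrite !sum_inv_mul_rev // (_ : 2 * 1 + d - 1 = d.+1)%N; last lia.
rewrite (_ : 2 * (u - d).+1 + d - 1 = 2 * u + 1 - d)%N; last lia.
have -> : \sum_(0 <= i < d) 1 / ((u - d).+1 + i)%:R = harmonic_tail R u d.
  by rewrite harmonic_tailE //; apply: eq_big_nat => i _; rewrite addSnnS addnS.
have -> : \sum_(0 <= i < d) 1 / (1 + i)%:R = harmonic R d :> R.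
  by apply: eq_big_nat => i _; rewrite add1n.
rewrite /harmonic_tail; field.
by rewrite nat1r !natr_neq0 //; lia.
Qed.

Lemma autocorr_le u d : (0 < d <= u)%N ->
  `|autocorr u d| <= 2 * harmonic R d / (d%:R * d.+1%:R) + 4 * harmonic_tail R u d / d%:R.
Proof.
move=> /[dup] /andP[d_gt0 le_du] d_range; rewrite autocorr_closed //.
have tail_ge0 : 0 <= harmonic_tail R u d by exact: harmonic_tail_ge0.
have mul_tail_div c : c * harmonic_tail R u d / d%:R = c * (harmonic_tail R u d / d%:R).
  by rewrite mulrA.
rewrite !mul_tail_div.
set P := 2 * harmonic R d / _; set Q := harmonic_tail R u d / d%:R.
set W := 2 * harmonic_tail R u d / _.
have P_ge0 : 0 <= P by rewrite divr_ge0 ?mulr_ge0 ?harmonic_ge0.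
have Q_ge0 : 0 <= Q by rewrite divr_ge0.
have W_ge0 : 0 <= W by rewrite divr_ge0 ?mulr_ge0.
have W_le : W <= 2 * Q.
  rewrite /W /Q mulrA ler_wpM2l ?mulr_ge0 // lef_pV2 ?posrE ?ltr0n ?ler_nat; lia.
rewrite ler_norml; apply/andP; split; lra.
Qed.

Lemma sum_abs_autocorr_half u : (0 < u)%N ->
  \sum_(0 <= i < u) `|autocorr u i.+1| <= 20.
Proof.
move=> u_gt0.
have term_le i : (i < u)%N -> `|autocorr u i.+1| <=
    2 * (harmonic R i.+1 / (i.+1%:R * i.+2%:R)) + 8 / u%:R + 8 * (harmonic_tail R u i.+1 / u%:R).
  move=> lt_iu; have := @autocorr_le u i.+1 lt_iu; have := @harmonic_tail_div_le R u i.+1 lt_iu.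
  rewrite -!mulrA; set a := harmonic R i.+1 / _.
  set q := harmonic_tail R u i.+1 / i.+1%:R; set t := harmonic_tail R u i.+1 / u%:R.
  lra.
apply: le_trans (ler_sum_nat (fun i (h : (0 <= i < u)%N) => term_le i (proj2 (andP h)))) _.
rewrite !big_split /= -!big_distrr /= -mulr_suml sum_harmonic_tail sumr_const_nat subn0.
have u_neq0 : u%:R != 0 :> R by rewrite natr_neq0.
rewrite -[u%:R^-1 *+ u]mulr_natr mulVf // divff // !mulr1.
have := sum_harmonic_weighted_le R u; lra.
Qed.

Lemma abs_autocorr0_le u : `|autocorr u 0| <= 4.
Proof.
rewrite autocorr_split // [X in _ - X - _]big_geq // [X in _ - X]big_geq // !subr0 subn0.
under eq_bigr do rewrite addn0.
have := sum_inv_sq_le R u.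
have : 0 <= \sum_(0 <= i < u) 1 / (i.+1%:R * i.+1%:R) :> R.
  by apply: sumr_ge0 => i _; rewrite divr_ge0 ?mulr_ge0.
have : 0 <= 2 / u.+1%:R :> R by rewrite divr_ge0.
set S := \sum_(0 <= i < u) _; set c := 2 / _; move=> c_ge0 S_ge0 S_le.
by rewrite ger0_norm ?mulr_ge0 //; lra.
Qed.

Lemma autocorr_sym u x : (x <= 2 * u)%N -> autocorr u (2 * u - x) = autocorr u x.
Proof.
move=> le_x2u; rewrite /autocorr.
rewrite -(@sum_periodic_shift _ (2 * u) (fun d => bias u d * bias u (d + (2 * u - x))) _ x);
  last by move=> y /=; rewrite bias_periodic addnAC bias_periodic.
apply: eq_bigr => d _ /=; rewrite (_ : x + d + (2 * u - x) = d + 2 * u)%N; last lia.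
by rewrite bias_periodic addnC mulrC.
Qed.

Lemma sum_abs_autocorr_le u : (0 < u)%N -> \sum_(0 <= d < 2 * u) `|autocorr u d| <= 44.
Proof.
move=> u_gt0; rewrite (big_cat_nat _ (n := u)) /=; [|lia|lia].
have -> : \sum_(u <= d < 2 * u) `|autocorr u d| = \sum_(0 <= i < u) `|autocorr u i.+1|.
  rewrite big_nat_from0 (_ : 2 * u - u = u)%N; last lia.
  rewrite big_nat_rev /=; apply: eq_big_nat => i /andP[_ lt_iu].
  by rewrite (_ : 0 + u - i.+1 + u = 2 * u - i.+1)%N ?autocorr_sym //; lia.
have : \sum_(0 <= d < u) `|autocorr u d| <= 4 + \sum_(0 <= i < u) `|autocorr u i.+1|.
  case: u u_gt0 => // u _; rewrite big_nat_recl // big_nat_recr //=.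
  by apply: lerD; [exact: abs_autocorr0_le | rewrite lerDl].
have := sum_abs_autocorr_half u_gt0; lra.
Qed.

Lemma sum_bias_mul_shift u a b : (a <= 2 * u)%N ->
  \sum_(0 <= d < 2 * u) bias u (a + d) * bias u (b + d)
    = autocorr u ((2 * u - a + b) %% (2 * u)).
Proof.
move=> le_a2u; rewrite /autocorr; set e := ((2 * u - a + b) %% (2 * u))%N.
rewrite -(@sum_periodic_shift _ (2 * u) (fun x => bias u x * bias u (x + e)) _ a);
  last by move=> x /=; rewrite bias_periodic addnAC bias_periodic.
apply: eq_bigr => d _ /=; congr (_ * _).
rewrite -[RHS]bias_mod /e modnDmr (_ : a + d + (2 * u - a + b) = b + d + 2 * u)%N; last lia.
by rewrite modnDr bias_mod.
Qed.

End Autocorrelation.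

Lemma sum_tuple_ffun (V : nmodType) n (G : n.-tuple bool -> V) :
  \sum_(t : n.-tuple bool) G t = \sum_(g : {ffun 'I_n -> bool}) G [tuple g i | i < n].
Proof.
rewrite (reindex (fun g : {ffun 'I_n -> bool} => [tuple g i | i < n])) //.
apply: onW_bij; exists (fun t : n.-tuple bool => [ffun i => tnth t i]).
  by move=> g; apply/ffunP => i; rewrite ffunE tnth_mktuple.
by move=> t; apply: eq_from_tnth => i; rewrite tnth_mktuple ffunE.
Qed.

Lemma expect_sgn_pair n (p : nat -> rat) (a b : 'I_n) : a != b ->
  \sum_(t : n.-tuple bool)
     (\prod_(i < n) (if nth false t i then p i else 1 - p i))
       * sgn (nth false t a) * sgn (nth false t b)
  = (2 * p a - 1) * (2 * p b - 1).
Proof.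
move=> neq_ab.
pose f (i : 'I_n) (x : bool) : rat := (if x then p i else 1 - p i)
   * (if i == a then sgn x else 1) * (if i == b then sgn x else 1).
have factor (t : n.-tuple bool) :
    (\prod_(i < n) (if nth false t i then p i else 1 - p i))
      * sgn (nth false t a) * sgn (nth false t b) = \prod_(i < n) f i (nth false t i).
  by rewrite /f !big_split /= -!big_mkcond !big_pred1_eq.
under eq_bigr do rewrite factor.
rewrite sum_tuple_ffun.
under eq_bigr do under eq_bigr do rewrite nth_mktuple.
rewrite -bigA_distr_bigA /=.
have sum_f i : \sum_(x : bool) f i x
    = (if i == a then 2 * p i - 1 else 1) * (if i == b then 2 * p i - 1 else 1).
  rewrite big_bool /f /sgn.
  case: (eqVneq i a) => [eq_ia|_]; case: (eqVneq i b) => [eq_ib|_] //=;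
    rewrite ?(mulr1, mul1r, mulrN1); try ring.
  by move: neq_ab; rewrite -eq_ia -eq_ib eqxx.
under eq_bigr do rewrite sum_f.
by rewrite big_split /= -!big_mkcond !big_pred1_eq.
Qed.

Lemma idx_natD k (i j : nat) : (0 < i)%N -> idx k (i%:Z + j%:Z) = ((i - 1 + j) %% 4 ^ k)%N.
Proof.
move=> i_gt0; rewrite /idx -PoszD subzn; last lia.
by rewrite modz_nat absz_nat; congr (_ %% _)%N; lia.
Qed.

Lemma idxDn k (x : int) : idx k (x + (4 ^ k)%N%:Z) = idx k x.
Proof. by rewrite /idx addrAC modzDr. Qed.

Lemma divn_modn_sq_shift (x d s : nat) : (0 < s)%N ->
  (((x + d * s) %% (s * s)) %/ s = (x %/ s + d) %% s)%N.
Proof.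
move=> s_gt0; set q := (x %/ s + d)%N.
have -> : (x + d * s = (q %/ s) * (s * s) + ((q %% s) * s + x %% s))%N.
  by have := divn_eq x s; have := divn_eq q s; rewrite /q; nia.
rewrite modnMDl modn_small; last by have := ltn_pmod q s_gt0; have := ltn_pmod x s_gt0; nia.
by rewrite divnMDl // divn_small ?addn0 // ltn_pmod.
Qed.

Lemma sqn_gt0 k : (0 < sqn k)%N.
Proof. by rewrite /sqn expn_gt0. Qed.

Lemma sqn_ell k : (0 < k)%N -> sqn k = (2 * ell k)%N.
Proof. by case: k => // k _; rewrite /sqn /ell expnS !mul2n doubleK. Qed.

Lemma expn4_sqn k : (4 ^ k = sqn k * sqn k)%N.
Proof. by rewrite /sqn -expnMn. Qed.

Lemma prob_bias k p : (0 < k)%N -> (p < 4 ^ k)%N ->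
  2 * prob k p - 1 = bias rat (ell k) (p %/ sqn k).
Proof.
move=> k_gt0 lt_p; have s_eq := sqn_ell k_gt0.
have lt_q : (p %/ sqn k < 2 * ell k)%N by rewrite -s_eq ltn_divLR ?sqn_gt0 // -expn4_sqn.
rewrite /prob /blk /bias (modn_small lt_q) addn1.
case: ifP => [lt_qu|ge_qu].
  rewrite (_ : ell k + 1 - (p %/ sqn k).+1 = ell k - p %/ sqn k)%N; last lia.
  by field; rewrite natr_neq0 //; lia.
by field; rewrite natr_neq0 //; lia.
Qed.

Lemma E2_autocorr k (i j : nat) : (0 < k)%N ->
  (0 < i <= 4 ^ k)%N -> (0 < j <= 4 ^ k)%N -> i <> j ->
  E2 k i%:Z j%:Z = 1 / (sqn k)%:R *
    autocorr rat (ell k) ((sqn k - (i - 1) %/ sqn k + (j - 1) %/ sqn k) %% sqn k).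
Proof.
move=> k_gt0 /andP[i_gt0 le_in] /andP[j_gt0 le_jn] neq_ij.
have n_gt0 : (0 < 4 ^ k)%N by rewrite expn_gt0.
have bias_modsqn x : bias rat (ell k) (x %% sqn k) = bias rat (ell k) x.
  by rewrite (sqn_ell k_gt0) bias_mod.
rewrite /E2; congr (_ * _).
transitivity (\sum_(0 <= d < sqn k)
    bias rat (ell k) ((i - 1) %/ sqn k + d) * bias rat (ell k) ((j - 1) %/ sqn k + d)).
  rewrite big_mkord; apply: eq_bigr => d _; rewrite /hval !idx_natD //.
  set a := ((i - 1 + d * sqn k) %% 4 ^ k)%N; set b := ((j - 1 + d * sqn k) %% 4 ^ k)%N.
  have lt_a : (a < 4 ^ k)%N by rewrite ltn_pmod.
  have lt_b : (b < 4 ^ k)%N by rewrite ltn_pmod.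
  have neq_ab : Ordinal lt_a != Ordinal lt_b.
    apply/eqP => /(congr1 val) /= /eqP.
    by rewrite /a /b eqn_modDr !modn_small; [move/eqP; lia | lia | lia].
  have /= -> := @expect_sgn_pair _ (prob k) _ _ neq_ab.
  rewrite !prob_bias // /a /b expn4_sqn !divn_modn_sq_shift ?sqn_gt0 //.
  by rewrite !bias_modsqn.
rewrite (sqn_ell k_gt0) sum_bias_mul_shift // -(sqn_ell k_gt0).
by apply: ltnW; rewrite ltn_divLR ?sqn_gt0 // -expn4_sqn; lia.
Qed.

Lemma E2_shift k (i j : int) : E2 k i j = E2 k (i + (2 ^ k)%N%:Z) (j + (2 ^ k)%N%:Z).
Proof.
pose F d := \sum_(t : (4 ^ k).-tuple bool)
  wt t * hval t (i + (d * sqn k)%N%:Z) * hval t (j + (d * sqn k)%N%:Z).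
have F_periodic x : F (x + sqn k)%N = F x.
  have shift y : y + ((x + sqn k) * sqn k)%N%:Z = y + (x * sqn k)%N%:Z + (4 ^ k)%N%:Z.
    by rewrite expn4_sqn mulnDl PoszD addrA.
  by apply: eq_bigr => t _; rewrite /hval !shift !idxDn.
have := sum_periodic_shift F_periodic 1; rewrite !big_mkord => shift1.
rewrite /E2 -shift1; congr (_ * _); apply: eq_bigr => d _; apply: eq_bigr => t _.
have shift y : y + (2 ^ k)%N%:Z + (d * sqn k)%N%:Z = y + ((1 + d) * sqn k)%N%:Z.
  by rewrite mulnDl mul1n PoszD addrA.
by rewrite !shift.
Qed.

Lemma sum_abs_E2_le k : (0 < k)%N ->
  \sum_(1 <= i < (4 ^ k).+1) \sum_(1 <= j < (4 ^ k).+1 | i != j) `|E2 k i%:Z j%:Z|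
    <= 44 * (4 ^ k)%:R.
Proof.
move=> k_gt0; have s_gt0 := sqn_gt0 k.
pose A a b := `|autocorr rat (ell k) ((sqn k - a + b) %% sqn k)|.
set T := \sum_(0 <= d < sqn k) `|autocorr rat (ell k) d|.
have ell_gt0 : (0 < ell k)%N by move: s_gt0; rewrite sqn_ell // muln_gt0.
have T_le : T <= 44 by rewrite /T sqn_ell // sum_abs_autocorr_le.
have row_sum a : \sum_(0 <= j < 4 ^ k) A a (j %/ sqn k)%N = T *+ sqn k.
  by rewrite expn4_sqn sum_divn (sum_modn_shift _ _ (fun d => `|autocorr rat (ell k) d|)).
apply: (@le_trans _ _ (\sum_(0 <= i < 4 ^ k) \sum_(0 <= j < 4 ^ k)
    1 / (sqn k)%:R * A (i %/ sqn k)%N (j %/ sqn k)%N)).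
  rewrite big_add1 /=; apply: ler_sum_nat => i /andP[_ lt_i].
  rewrite big_add1 big_mkcond /=; apply: ler_sum_nat => j /andP[_ lt_j].
  case: eqP => [_|neq_ij] /=; first by rewrite mulr_ge0 ?divr_ge0 /A.
  rewrite E2_autocorr; try lia.
  by rewrite normrM ger0_norm ?divr_ge0 // !subn1.
rewrite (eq_big_nat _ _ (F2 := fun=> T)); last first.
  move=> i _; rewrite -big_distrr /= row_sum -[T *+ _]mulr_natl.
  by rewrite mulrA mul1r mulVf ?mul1r // natr_neq0.
rewrite sumr_const_nat subn0 -[T *+ _]mulr_natr.
by apply: ler_wpM2r.
Qed.

Theorem lemma2p2 :
  (forall k : nat, (0 < k)%N -> forall i j : int,
      E2 k i j = E2 k (i + (2 ^ k)%N%:Z) (j + (2 ^ k)%N%:Z))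
  /\
  (forall k : nat, (0 < k)%N -> forall i i' j j' : nat,
      (1 <= i <= 4 ^ k)%N -> (1 <= i' <= 4 ^ k)%N ->
      (1 <= j <= 4 ^ k)%N -> (1 <= j' <= 4 ^ k)%N ->
      ((i - 1) %/ 2 ^ k = (i' - 1) %/ 2 ^ k)%N ->
      ((j - 1) %/ 2 ^ k = (j' - 1) %/ 2 ^ k)%N ->
      i <> j -> i' <> j' ->
      E2 k i%:Z j%:Z = E2 k i'%:Z j'%:Z)
  /\
  (exists C : rat, forall k : nat, (0 < k)%N ->
      \sum_(1 <= i < (4 ^ k).+1) \sum_(1 <= j < (4 ^ k).+1 | i != j)
        `|E2 k i%:Z j%:Z| <= C * (4 ^ k)%:R).
Proof.
split; first by move=> k _ i j; apply: E2_shift.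
split; last by exists 44 => k; apply: sum_abs_E2_le.
move=> k k_gt0 i i' j j' i_range i'_range j_range j'_range same_i same_j neq_ij neq_i'j'.
by rewrite !E2_autocorr // /sqn same_i same_j.
Qed.
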